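(* Let $Q_6(I,S)$ and $Q_6(J,T)$ be finite. A map $\varphi:Q_6(I,S)\to Q_6(J,T)$ is a surjective $pm$-morphism if and only if: (1) $\varphi(S)=T$ and $\varphi(\zeta(x))=\zeta(\varphi(x))$ for all $x\in S$; (2) $\varphi^{-1}(J)\subseteq I$; (3) $\varphi(x)\ne\varphi(y)$ for distinct $x,y\in\varphi^{-1}(J)$; (4) for every $x\in I\setminus\varphi^{-1}(J)$ there exists $u\in S\setminus\varphi^{-1}(J)$ with $u\ne x$ and $\varphi(u)=\varphi(x)$.
   Context: For a finite set $S$ with $|S|\ge3$ and $I\subseteq S$, $Q_6(I,S)$ is the finite poset with involution on $S\cup\zeta(S)$, where $\zeta(S)$ is a disjoint copy of $S$, $\zeta$ interchanges each $s\in S$ with its copy $\zeta(s)$, the topology is discrete, and the only strict comparabilities are: for $x,y\in S$, $x<\zeta(y)$ iff ($x\ne y$ or $x\notin I$). For $pm$-spaces $P,Q$, a $pm$-morphism $\varphi:P\to Q$ is a continuous order-preserving map with $\varphi\circ\zeta=\zeta\circ\varphi$ and $\mathrm{Min}(\varphi(x))\subseteq\varphi(\mathrm{Min}(x))$ for all $x\in P$, where $\mathrm{Min}(z)$ denotes the set of minimal elements of the space lying below $z$. *)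

From mathcomp Require Import all_boot.
Set Implicit Arguments. Unset Strict Implicit. Unset Printing Implicit Defensive.

(* Points of Q_6(I,S): inl s is s in S, inr s is its copy zeta(s). *)
Definition Q6pt (S : finType) := (S + S)%type.

Definition q6_zeta (S : finType) (x : Q6pt S) : Q6pt S :=
  match x with inl a => inr a | inr a => inl a end.

Definition q6_le (S : finType) (I : {set S}) (x y : Q6pt S) : bool :=
  (x == y) ||
  match x, y with
  | inl a, inr b => (a != b) || (a \notin I)
  | _, _ => false
  end.

Definition q6_lt (S : finType) (I : {set S}) (x y : Q6pt S) : bool :=
  (x != y) && q6_le I x y.

Definition q6_Min (S : finType) (I : {set S}) (z : Q6pt S) : {set Q6pt S} :=
  [set m | [forall y, ~~ q6_lt I y m] && q6_le I m z].

(* pm-morphism Q_6(I,S) -> Q_6(J,T). Continuity is automatic since the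
   topology of Q_6(I,S) is discrete, so it is omitted. *)
Definition q6_pm_morphism (S T : finType) (I : {set S}) (J : {set T})
  (phi : Q6pt S -> Q6pt T) : Prop :=
  [/\ (forall x y, q6_le I x y -> q6_le J (phi x) (phi y)),
      (forall x, phi (q6_zeta x) = q6_zeta (phi x)) &
      (forall x, q6_Min J (phi x) \subset phi @: q6_Min I x)].

Definition q6_preJ (S T : finType) (J : {set T}) (phi : Q6pt S -> Q6pt T)
  : {set Q6pt S} := [set p | [exists j in J, phi p == inl j]].

From mathcomp Require Import all_boot.

Set Implicit Arguments. Unset Strict Implicit. Unset Printing Implicit Defensive.

(* The Min condition forces a pm-morphism to send points of S to points of
   T: a point of S has itself as only minimal lower bound, while zeta(t) lies
   above every point of T other than t.  With zeta-equivariance, phi is then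
   the map induced by some f : S -> T, surjective when phi is.  For such a
   map, monotonicity says exactly that f(a) = f(b) in J forces a = b in I,
   and the Min condition at zeta(s) asks for a second preimage of f(s) when
   s is in I but f(s) is not in J. *)

Definition q6_base (S : finType) (x : Q6pt S) : S :=
  match x with inl s | inr s => s end.

Definition q6_map (S T : finType) (f : S -> T) (x : Q6pt S) : Q6pt T :=
  match x with inl s => inl (f s) | inr s => inr (f s) end.

Lemma exists_neq (S : finType) (b : S) : 1 < #|S| -> exists a : S, a != b.
Proof.
case/card_gt1P=> [x [y [_ _ xy]]].
by case: (eqVneq x b) => [xb | ]; [exists y; rewrite -xb eq_sym | exists x].
Qed.

Section Q6Min.

Variables (S : finType) (I : {set S}).

Lemma q6_inl_minimal a : [forall y, ~~ q6_lt I y (inl a)].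
Proof. by apply/forallP=> -[d|d]; rewrite /q6_lt /q6_le /= ?orbF ?andNb. Qed.

Lemma q6_Min_inl a : q6_Min I (inl a) = [set inl a].
Proof.
apply/setP=> -[c|c]; rewrite !inE /q6_le /= ?andbF // q6_inl_minimal.
by rewrite orbF.
Qed.

Lemma mem_q6_Min_inr b m : 1 < #|S| ->
  (m \in q6_Min I (inr b)) = if m is inl a then (a != b) || (a \notin I) else false.
Proof.
move=> hS; rewrite inE; case: m => [a|c]; first by rewrite q6_inl_minimal.
have [a ac] := exists_neq c hS.
apply/negbTE/nandP; left; apply/forallPn; exists (inl a).
by rewrite negbK /q6_lt /q6_le /= ac.
Qed.

End Q6Min.

Section Q6Map.

Variables (S T : finType) (I : {set S}) (J : {set T}) (f : S -> T).

Lemma q6_map_homo_le_iff :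
  (forall x y, q6_le I x y -> q6_le J (q6_map f x) (q6_map f y)) <->
  (forall a b, f a = f b -> f a \in J -> (a == b) && (a \in I)).
Proof.
split=> [le_f a b fab faJ | inj_f x y].
  apply: contraT; rewrite negb_and => ab_or_aI.
  by have := le_f (inl a) (inr b) ab_or_aI; rewrite /q6_le /= fab eqxx -fab faJ.
rewrite {1}/q6_le => /orP [/eqP -> | ]; first by rewrite /q6_le eqxx.
case: x => [a|a] //; case: y => [b|b] //= ab_or_aI.
rewrite /q6_le /=; apply: contraTT ab_or_aI; rewrite !negb_or !negbK.
by case/andP=> /eqP fab faJ; exact: inj_f.
Qed.

Lemma q6_map_Min_iff : 1 < #|S| -> 1 < #|T| -> (forall t, exists s, f s = t) ->
  (forall x, q6_Min J (q6_map f x) \subset q6_map f @: q6_Min I x) <->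
  (forall s, s \in I -> f s \notin J -> exists2 u, u != s & f u = f s).
Proof.
move=> hS hT f_surj; split=> [Min_f s sI fsJ | split_f].
  have := subsetP (Min_f (inr s)) (inl (f s)).
  rewrite mem_q6_Min_inr // fsJ orbT => /(_ isT) /imsetP [[c|c] //].
  rewrite mem_q6_Min_inr //; case: (eqVneq c s) => [-> | cs]; rewrite ?eqxx ?sI //=.
  by move=> _ [fcs]; exists c.
case=> [s|s]; first by rewrite /= !q6_Min_inl imset_set1 subxx.
rewrite /=; apply/subsetP=> -[t|t]; rewrite mem_q6_Min_inr // => tfs_or_tJ.
have [c fct] := f_surj t.
have [tfs | tfs] := eqVneq t (f s).
  have fsJ : f s \notin J by move: tfs_or_tJ; rewrite tfs eqxx.
  case: (boolP (s \in I)) => [sI | sI].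
    have [u us fus] := split_f s sI fsJ.
    by apply/imsetP; exists (inl u); rewrite ?mem_q6_Min_inr // ?us //= fus tfs.
  by apply/imsetP; exists (inl s); rewrite ?mem_q6_Min_inr // ?sI ?orbT //= tfs.
apply/imsetP; exists (inl c); rewrite /= ?fct // mem_q6_Min_inr //.
by apply/orP; left; apply: contra_neq tfs => cs; rewrite -fct cs.
Qed.

End Q6Map.

Lemma q6_mapE (S T : finType) (phi : Q6pt S -> Q6pt T) :
  (forall s, exists t, phi (inl s) = inl t) ->
  (forall s, phi (inr s) = q6_zeta (phi (inl s))) ->
  phi =1 q6_map (fun s => q6_base (phi (inl s))).
Proof. by move=> base zeta [s|s]; have [t phis] := base s; rewrite /= ?zeta phis. Qed.

Lemma q6_Min_base_to_base (S T : finType) (I : {set S}) (J : {set T})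
    (phi : Q6pt S -> Q6pt T) :
  1 < #|T| -> (forall x, q6_Min J (phi x) \subset phi @: q6_Min I x) ->
  forall s, exists t, phi (inl s) = inl t.
Proof.
move=> hT Min_phi s; case phis: (phi (inl s)) => [t|t]; first by exists t.
have [a ta] := exists_neq t hT.
have := subsetP (Min_phi (inl s)) (inl a).
by rewrite q6_Min_inl imset_set1 phis mem_q6_Min_inr // ta inE => /(_ isT).
Qed.

Lemma q6_imset_base_to_base (S T : finType) (phi : Q6pt S -> Q6pt T) :
  [set phi (inl s) | s : S] = [set inl t | t : T] ->
  forall s, exists t, phi (inl s) = inl t.
Proof.
move=> img_phi s; have : phi (inl s) \in [set inl t | t : T] by rewrite -img_phi imset_f.
by case/imsetP=> t _ ->; exists t.
Qed.

Section InducedMap.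

Variables (S T : finType) (I : {set S}) (J : {set T}) (f : S -> T).
Variable phi : Q6pt S -> Q6pt T.
Hypothesis phiE : phi =1 q6_map f.

Lemma mem_q6_preJ x :
  (x \in q6_preJ J phi) = if x is inl s then f s \in J else false.
Proof.
rewrite inE phiE; case: x => s /=; last by apply/existsP=> -[j /andP []].
apply/existsP/idP=> [[j /andP [jJ /eqP [->]]] // | fsJ].
by exists (f s); rewrite fsJ eqxx.
Qed.

Lemma q6_preJ_conditions_iff :
  q6_preJ J phi \subset [set inl i | i in I] /\
  (forall x y, x \in q6_preJ J phi -> y \in q6_preJ J phi -> x != y -> phi x != phi y)
  <-> (forall a b, f a = f b -> f a \in J -> (a == b) && (a \in I)).
Proof.
split=> [[sub_preJ inj_preJ] a b fab faJ | inj_f].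
  have aJ : inl a \in q6_preJ J phi by rewrite mem_q6_preJ.
  have bJ : inl b \in q6_preJ J phi by rewrite mem_q6_preJ -fab.
  rewrite -(mem_imset _ _ (@inl_inj S S)) (subsetP sub_preJ _ aJ) andbT.
  apply/negPn/negP=> ab.
  by have := inj_preJ _ _ aJ bJ ab; rewrite !phiE /= fab eqxx.
split=> [ | [a|a] [b|b]]; rewrite ?mem_q6_preJ //.
  apply/subsetP=> -[s|s]; rewrite mem_q6_preJ // => fsJ.
  by case/andP: (inj_f s s erefl fsJ) => _ sI; rewrite mem_imset //; apply: inl_inj.
move=> faJ _ ab; rewrite !phiE; apply: contra_neq ab => -[fab].
by case/andP: (inj_f a b fab faJ) => /eqP ->.
Qed.

Lemma q6_split_condition_iff :
  (forall x : S, x \in I -> inl x \notin q6_preJ J phi ->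
     exists u : S, [/\ inl u \notin q6_preJ J phi, u != x & phi (inl u) = phi (inl x)])
  <-> (forall s, s \in I -> f s \notin J -> exists2 u, u != s & f u = f s).
Proof.
split=> [split_phi s sI fsJ | split_f s sI].
  have [|u [_ us]] := split_phi s sI; first by rewrite mem_q6_preJ.
  by rewrite !phiE => -[fus]; exists u.
rewrite mem_q6_preJ => fsJ; have [u us fus] := split_f s sI fsJ.
by exists u; rewrite mem_q6_preJ !phiE /= fus.
Qed.

Lemma q6_surjective_iff :
  (forall y, exists x, phi x = y) <-> (forall t, exists s, f s = t).
Proof.
split=> [surj_phi t | surj_f [t|t]].
  by have [[s|s]] := surj_phi (inl t); rewrite phiE => // -[fst]; exists s.
  by have [s fst] := surj_f t; exists (inl s); rewrite phiE /= fst.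
by have [s fst] := surj_f t; exists (inr s); rewrite phiE /= fst.
Qed.

Lemma q6_imset_base_iff :
  [set phi (inl s) | s : S] = [set inl t | t : T] <-> (forall t, exists s, f s = t).
Proof.
split=> [img_phi t | surj_f].
  have : inl t \in [set phi (inl s) | s : S] by rewrite img_phi imset_f.
  by case/imsetP=> s _; rewrite phiE => -[fst]; exists s.
apply/setP=> y; apply/imsetP/imsetP=> [[s _ ->] | [t _ ->]].
  by exists (f s); rewrite ?phiE.
by have [s fst] := surj_f t; exists s; rewrite ?phiE /= ?fst.
Qed.

Lemma q6_pm_morphism_iff : 1 < #|S| -> 1 < #|T| -> (forall t, exists s, f s = t) ->
  q6_pm_morphism I J phi <->
  [/\ q6_preJ J phi \subset [set inl i | i in I],
      (forall x y, x \in q6_preJ J phi -> y \in q6_preJ J phi -> x != y ->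
         phi x != phi y) &
      (forall x : S, x \in I -> inl x \notin q6_preJ J phi ->
         exists u : S, [/\ inl u \notin q6_preJ J phi, u != x &
                           phi (inl u) = phi (inl x)])].
Proof.
move=> hS hT surj_f.
have le_iff : (forall x y, q6_le I x y -> q6_le J (phi x) (phi y)) <->
              (forall a b, f a = f b -> f a \in J -> (a == b) && (a \in I)).
  apply: iff_trans (q6_map_homo_le_iff I J f).
  by split=> le_phi x y; move/le_phi; rewrite !phiE.
have Min_iff : (forall x, q6_Min J (phi x) \subset phi @: q6_Min I x) <->
               (forall s, s \in I -> f s \notin J -> exists2 u, u != s & f u = f s).
  apply: iff_trans (q6_map_Min_iff I J hS hT surj_f).
  by split=> Min_phi x; move: (Min_phi x); rewrite phiE (eq_imset _ phiE).
have zeta_phi x : phi (q6_zeta x) = q6_zeta (phi x) by rewrite !phiE; case: x.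
split=> [[/le_iff/q6_preJ_conditions_iff [sub_preJ inj_preJ] _
          /Min_iff/q6_split_condition_iff] |
         [sub_preJ inj_preJ /q6_split_condition_iff/Min_iff Min_phi]] //.
by split=> //; apply/le_iff/q6_preJ_conditions_iff.
Qed.

End InducedMap.

Theorem lemma5p2 (S T : finType) (I : {set S}) (J : {set T})
  (hS : 3 <= #|S|) (hT : 3 <= #|T|) (phi : Q6pt S -> Q6pt T) :
  (q6_pm_morphism I J phi /\ (forall y, exists x, phi x = y)) <->
  [/\ [set phi (inl s) | s : S] = [set inl t | t : T]
        /\ (forall s : S, phi (q6_zeta (inl s)) = q6_zeta (phi (inl s))),
      q6_preJ J phi \subset [set inl i | i in I],
      (forall x y, x \in q6_preJ J phi -> y \in q6_preJ J phi -> x != y ->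
         phi x != phi y) &
      (forall x : S, x \in I -> inl x \notin q6_preJ J phi ->
         exists u : S, [/\ inl u \notin q6_preJ J phi, u != x &
                           phi (inl u) = phi (inl x)])].
Proof.
have hS1 : 1 < #|S| by exact: leq_trans hS.
have hT1 : 1 < #|T| by exact: leq_trans hT.
split=> [[pm_phi surj_phi] | [[img_phi zeta_phi] sub_preJ inj_preJ split_phi]].
  have [_ zeta_phi Min_phi] := pm_phi.
  have phiE := q6_mapE (q6_Min_base_to_base hT1 Min_phi) (fun s => zeta_phi (inl s)).
  have surj_f := (q6_surjective_iff phiE).1 surj_phi.
  have [sub_preJ inj_preJ split_phi] :=
    (q6_pm_morphism_iff I J phiE hS1 hT1 surj_f).1 pm_phi.
  by split=> //; split=> //; apply/(q6_imset_base_iff phiE).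
have phiE := q6_mapE (q6_imset_base_to_base img_phi) zeta_phi.
have surj_f := (q6_imset_base_iff phiE).1 img_phi.
split; first exact/(q6_pm_morphism_iff I J phiE hS1 hT1 surj_f).
exact/(q6_surjective_iff phiE).
Qed.
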